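(* For every $w\in\Sigma^+$ and every $k\in\mathbb{N}$ there exist $p\in\mathbb{N}$ with $p\ge1$ and $v\in\Sigma^*$ such that $v\neq w^p$ and $w^p\equiv_k v$.
   Context: $\Sigma$ is a fixed finite alphabet. For $w \in \Sigma^*$, $\mathsf{Facs}(w)$ is the set of all factors (contiguous subwords, including $\varepsilon$ and $w$) of $w$. The structure $\mathfrak{A}_w$ representing $w$ has universe $\mathsf{Facs}(w)\cup\{\perp\}$, a ternary relation $R_\circ=\{(x,y,z)\in\mathsf{Facs}(w)^3 : x=y\cdot z\}$, for each letter $\mathtt{a}\in\Sigma$ a constant interpreted as $\mathtt{a}$ if $\mathtt{a}$ occurs in $w$ and as $\perp$ otherwise, and a constant $\varepsilon$ interpreted as the empty word. The $k$-round Ehrenfeucht–Fraïssé game on $\mathfrak{A}_w,\mathfrak{A}_v$: in each round $i$, Spoiler picks one of the two structures and an element of its universe, Duplicator answers with an element of the other structure's universe; let $a_i$ (in $\mathfrak{A}_w$) and $b_i$ (in $\mathfrak{A}_v$) be the chosen elements. Duplicator wins if the tuples $(a_1,\dots,a_k,\vec c^{\,\mathfrak{A}_w})$ and $(b_1,\dots,b_k,\vec c^{\,\mathfrak{A}_v})$, where $\vec c$ lists the interpretations of all constants, form a partial isomorphism: for all indices $i,j,l$, $a_i$ equals the interpretation of a constant $c$ iff $b_i$ equals the interpretation of $c$; $a_i=a_j$ iff $b_i=b_j$; and $a_i=a_j\cdot a_l$ iff $b_i=b_j\cdot b_l$. We write $w\equiv_k v$ if Duplicator has a winning strategy in the $k$-round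 game. *)

From mathcomp Require Import all_boot.
Set Implicit Arguments. Unset Strict Implicit. Unset Printing Implicit Defensive.

Section EF.
Variable Sigma : finType.

(* Elements of the universe of A_w: [Some u] is the factor u, [None] is bot. *)
Definition elt := option (seq Sigma).

Definition univ (w : seq Sigma) (x : elt) : bool :=
  if x is Some u then infix u w else true.

Definition consts (w : seq Sigma) : seq elt :=
  Some [::] :: [seq (if a \in w then Some [:: a] else None) | a <- enum Sigma].

Definition relc (x y z : elt) : bool :=
  match x, y, z with
  | Some x', Some y', Some z' => x' == y' ++ z'
  | _, _, _ => false
  end.

Definition partial_iso (w v : seq Sigma) (as_ bs : seq elt) : Prop :=
  let A := as_ ++ consts w in
  let B := bs ++ consts v in
  size as_ = size bs /\
  forall i j l, i < size A -> j < size A -> l < size A ->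
    ((nth None A i == nth None A j) = (nth None B i == nth None B j)) /\
    (relc (nth None A i) (nth None A j) (nth None A l)
     = relc (nth None B i) (nth None B j) (nth None B l)).

Fixpoint dup_wins (n : nat) (w v : seq Sigma) (as_ bs : seq elt) : Prop :=
  match n with
  | 0 => partial_iso w v as_ bs
  | n'.+1 =>
      (forall a, univ w a -> exists2 b, univ v b &
          dup_wins n' w v (rcons as_ a) (rcons bs b)) /\
      (forall b, univ v b -> exists2 a, univ w a &
          dup_wins n' w v (rcons as_ a) (rcons bs b))
  end.

Definition ef_equiv (k : nat) (w v : seq Sigma) : Prop := dup_wins k w v [::] [::].

Definition wpow (w : seq Sigma) (p : nat) : seq Sigma := flatten (nseq p w).

End EF.

From mathcomp Require Import all_boot.
From mathcomp Require Import zify.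
Set Implicit Arguments. Unset Strict Implicit. Unset Printing Implicit Defensive.

(* Proof idea: a pigeonhole argument on rank-k types.
   For a fixed bound N on the number of tracked elements (chosen moves plus
   constants), the atomic type of a position (w, as) records, for all index
   triples below N, which tracked elements are equal and which satisfy the
   concatenation relation; it lives in a finite type.  The rank-(n+1) type of
   a position is the finite set of rank-n types of its one-move extensions,
   so rank-n types also range over a finite type.  If two positions of equal
   length have the same rank-n type, Duplicator wins the n-round game from
   them: she answers each move by a move realising the same rank-(n-1) type.
   Finally, among the #|types|+1 words w, w^2, ..., two powers w^p, w^q with
   p <> q share their rank-k type, so w^p ==_k w^q, and w^q <> w^p because
   w is non-empty. *)

Fixpoint rank_types (A : finType) (n : nat) : finType :=
  match n with 0 => A | n'.+1 => ({set rank_types A n'} : finType) end.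

Section RankTypes.
Variable Sigma : finType.

Definition factors (w : seq Sigma) : seq (seq Sigma) :=
  [seq u <- [seq take j (drop i w) | i <- iota 0 (size w).+1, j <- iota 0 (size w).+1]
    | infix u w].

Definition univ_enum (w : seq Sigma) : seq (elt Sigma) :=
  None :: [seq Some u | u <- factors w].

Lemma mem_univ_enum w a : (a \in univ_enum w) = univ w a.
Proof.
case: a => [u|] //=; rewrite inE /= mem_map; last by move=> x y [].
rewrite /factors mem_filter; apply/andP/idP => [[] //|uw]; split => //.
apply/allpairsP; case/infixP: uw => s [s' ->].
have mem_range m : m <= size (s ++ u ++ s') -> m \in iota 0 (size (s ++ u ++ s')).+1.
  by move=> le_m; rewrite mem_iota.
exists (size s, size u); split; rewrite ?drop_size_cat ?take_size_cat //;
  by apply: mem_range; rewrite /= !size_cat; lia.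
Qed.

Variable N : nat.

Definition Atom := {ffun 'I_N * 'I_N * 'I_N -> bool * bool}.

Definition atom (w : seq Sigma) (as_ : seq (elt Sigma)) : Atom :=
  [ffun t : 'I_N * 'I_N * 'I_N =>
    let A := as_ ++ consts w in
    (nth None A t.1.1 == nth None A t.1.2,
     relc (nth None A t.1.1) (nth None A t.1.2) (nth None A t.2))].

Fixpoint rank_type (n : nat) (w : seq Sigma) (as_ : seq (elt Sigma)) :
    rank_types Atom n :=
  match n with
  | 0 => atom w as_
  | n'.+1 => [set x in [seq rank_type n' w (rcons as_ a) | a <- univ_enum w]]
  end.

Lemma rank_type_answer n w v as_ bs a :
  rank_type n.+1 w as_ = rank_type n.+1 v bs -> univ w a ->
  exists2 b, univ v b & rank_type n w (rcons as_ a) = rank_type n v (rcons bs b).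
Proof.
move=> eq_tp wa.
have : rank_type n w (rcons as_ a) \in rank_type n.+1 w as_.
  by rewrite inE; apply/mapP; exists a; rewrite ?mem_univ_enum.
rewrite eq_tp inE => /mapP [b vb ->].
by exists b; rewrite -?mem_univ_enum.
Qed.

Lemma size_consts (w v : seq Sigma) : size (consts w) = size (consts v).
Proof. by rewrite /consts /= !size_map. Qed.

Lemma atom_partial_iso w v as_ bs : size as_ = size bs ->
  size as_ + size (consts w) <= N ->
  atom w as_ = atom v bs -> partial_iso w v as_ bs.
Proof.
move=> eq_size le_N eq_atom; split => // i j l; rewrite size_cat => lt_i lt_j lt_l.
have lt_iN : i < N by lia.
have lt_jN : j < N by lia.
have lt_lN : l < N by lia.
have := congr1 (fun f : Atom => f (Ordinal lt_iN, Ordinal lt_jN, Ordinal lt_lN)) eq_atom.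
by rewrite !ffunE /= => -[-> ->].
Qed.

Lemma rank_type_dup_wins n w v as_ bs : size as_ = size bs ->
  size as_ + n + size (consts w) <= N ->
  rank_type n w as_ = rank_type n v bs -> dup_wins n w v as_ bs.
Proof.
elim: n as_ bs => [|n IH] as_ bs eq_size le_N eq_tp.
  by apply: atom_partial_iso => //; lia.
split => [a wa | b vb].
- have [b vb eq_tp'] := rank_type_answer eq_tp wa.
  by exists b => //; apply: IH; rewrite ?size_rcons ?eq_size //; lia.
- have [a wa eq_tp'] := rank_type_answer (esym eq_tp) vb.
  by exists a => //; apply: IH; rewrite ?size_rcons ?eq_size //; lia.
Qed.

End RankTypes.

Lemma nat_collision (T : finType) (f : nat -> T) :
  exists i j, i != j /\ f i = f j.
Proof.
pose g (i : 'I_#|T|.+1) := f i.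
case: (boolP (injectiveb g)) => [/injectiveP g_inj | /injectivePn [i [j ne_ij eq_g]]].
  by have := leq_card g g_inj; rewrite card_ord ltnn.
by exists (val i), (val j).
Qed.

Lemma size_wpow (Sigma : finType) (w : seq Sigma) p : size (wpow w p) = p * size w.
Proof. by elim: p => //= p IH; rewrite /wpow /= size_cat -/(wpow w p) IH mulSn. Qed.

Lemma wpow_inj (Sigma : finType) (w : seq Sigma) : w != [::] -> injective (wpow w).
Proof.
move=> nz_w p q /(congr1 size) /eqP; rewrite !size_wpow eqn_mul2r.
by rewrite size_eq0 (negbTE nz_w) => /eqP.
Qed.

Theorem proposition4p9 (Sigma : finType) (w : seq Sigma) (k : nat) :
  w != [::] ->
  exists p : nat, 1 <= p /\
    exists v : seq Sigma, v != wpow w p /\ ef_equiv k (wpow w p) v.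
Proof.
move=> nz_w.
pose N := k + size (consts w).
have [i [j [ne_ij eq_tp]]] :=
  nat_collision (fun i => rank_type N k (wpow w i.+1) [::]).
exists i.+1; split => //; exists (wpow w j.+1); split.
  by apply: contra ne_ij => /eqP /(wpow_inj nz_w) [->].
apply: rank_type_dup_wins eq_tp => //.
by rewrite (size_consts _ w).
Qed.
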